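(* Let $\mu$ be a distribution over $X\times\mathbb{R}$, let $f_1:X\to\mathbb{R}$ and $b:X\to[-1,1]\cup\{*\}$. Assume \[ \mathbb{E}_{(x,y)\sim\mu}[(y-f_1(x))\diamondsuit b(x)]\le\alpha\quad\text{and}\quad\mathbb{E}_{(x,y)\sim\mu}[(f_1(x)-y)\,\mathrm{sign}(f_1(x))]\le\varepsilon. \] Then $\mathbb{E}_{(x,y)\sim\mu}[y\,\mathrm{sign}(f_1(x))]\ge\mathbb{E}_{(x,y)\sim\mu}[y\diamondsuit b(x)]-\alpha-\varepsilon$.
   Context: Distributions are discrete (countable support). For $u_1\in\mathbb{R}$, $u_2\in[-1,1]\cup\{*\}$, the generalized product is $u_1\diamondsuit u_2=u_1u_2$ if $u_2\in[-1,1]$ and $-|u_1|$ if $u_2=*$. $\mathrm{sign}(u)=1$ if $u\ge0$ and $-1$ if $u<0$. *)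

From Stdlib Require Import Reals.
From Coquelicot Require Import Coquelicot.
Open Scope R_scope.

(* [-1,1] ∪ {*} : Some v with -1 <= v <= 1, or None for * *)
Definition star_valued {X : Type} (b : X -> option R) : Prop :=
  forall x v, b x = Some v -> -1 <= v <= 1.

Definition gprod (u1 : R) (u2 : option R) : R :=
  match u2 with Some v => u1 * v | None => - Rabs u1 end.

Definition sgn (u : R) : R := if Rle_dec 0 u then 1 else -1.

(* A discrete (countable-support) distribution over T, given by atoms
   a n with weights w n (n : nat); weights nonnegative, summing to 1. *)
Definition is_discrete_distr {T : Type} (w : nat -> R) (a : nat -> T) : Prop :=
  (forall n, 0 <= w n) /\ is_series w 1.

Definition has_expect {T : Type} (w : nat -> R) (a : nat -> T) (g : T -> R) : Prop :=
  ex_series (fun n => Rabs (w n * g (a n))).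

Definition expect {T : Type} (w : nat -> R) (a : nat -> T) (g : T -> R) : R :=
  Series (fun n => w n * g (a n)).

(* Pointwise [y sgn f + (f - y) sgn f = |f|], and [u ◇ b] is 1-Lipschitz in [u]
   whatever the value of [b], so [y ◇ b <= y sgn f + (f - y) sgn f + (y - f) ◇ b];
   linearity and monotonicity of the expectation turn this into the bound. *)
From Stdlib Require Import Reals Lra.
From Coquelicot Require Import Coquelicot.
Open Scope R_scope.

Lemma Rmult_sgn_r (u : R) : u * sgn u = Rabs u.
Proof.
  unfold sgn; destruct (Rle_dec 0 u).
  - rewrite Rabs_right by lra; ring.
  - rewrite Rabs_left by lra; ring.
Qed.

Lemma gprod_sub_le (u u' : R) (bv : option R) :
  (forall v, bv = Some v -> -1 <= v <= 1) ->
  gprod u bv - gprod u' bv <= Rabs (u - u').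
Proof.
  intros Hb; destruct bv as [v|]; simpl.
  - specialize (Hb v eq_refl).
    replace (u * v - u' * v) with ((u - u') * v) by ring.
    apply Rle_trans with (1 := Rle_abs _).
    rewrite Rabs_mult; rewrite <- (Rmult_1_r (Rabs (u - u'))) at 2.
    apply Rmult_le_compat_l; [apply Rabs_pos | apply Rabs_le; lra].
  - pose proof (Rabs_triang_inv u' u) as Htri.
    rewrite Rabs_minus_sym in Htri; lra.
Qed.

Lemma Series_le_compat (u v : nat -> R) :
  ex_series u -> ex_series v -> (forall n, u n <= v n) -> Series u <= Series v.
Proof.
  intros Hu Hv Huv.
  apply (is_lim_seq_le (sum_n u) (sum_n v) (Series u) (Series v)).
  - intro N; rewrite !sum_n_Reals; apply sum_Rle; auto.
  - apply Series_correct, Hu.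
  - apply Series_correct, Hv.
Qed.

Section Expectation.

Variables (T : Type) (w : nat -> R) (a : nat -> T).

Lemma has_expect_plus (g h : T -> R) :
  has_expect w a g -> has_expect w a h -> has_expect w a (fun p => g p + h p).
Proof.
  intros Hg Hh; unfold has_expect in *.
  apply (@ex_series_le R_AbsRing R_CompleteNormedModule _ (fun n => Rabs (w n * g (a n)) + Rabs (w n * h (a n)))).
  - intro n; unfold norm; simpl; rewrite Rabs_Rabsolu, Rmult_plus_distr_l.
    apply Rabs_triang.
  - apply (ex_series_plus _ _ Hg Hh).
Qed.

Lemma expect_plus (g h : T -> R) :
  has_expect w a g -> has_expect w a h ->
  expect w a (fun p => g p + h p) = expect w a g + expect w a h.
Proof.
  intros Hg%ex_series_Rabs Hh%ex_series_Rabs; unfold expect.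
  rewrite <- Series_plus by assumption.
  apply Series_ext; intro n; ring.
Qed.

Lemma expect_le (g h : T -> R) :
  (forall n, 0 <= w n) -> has_expect w a g -> has_expect w a h ->
  (forall p, g p <= h p) -> expect w a g <= expect w a h.
Proof.
  intros Hw Hg%ex_series_Rabs Hh%ex_series_Rabs Hgh; unfold expect.
  apply Series_le_compat; try assumption.
  intro n; apply Rmult_le_compat_l; auto.
Qed.

End Expectation.

Theorem lemma6p3 (X : Type) (w : nat -> R) (a : nat -> X * R)
  (f1 : X -> R) (b : X -> option R) (alpha eps : R) :
  is_discrete_distr w a ->
  star_valued b ->
  has_expect w a (fun p => gprod (snd p - f1 (fst p)) (b (fst p))) ->
  has_expect w a (fun p => (f1 (fst p) - snd p) * sgn (f1 (fst p))) ->
  has_expect w a (fun p => snd p * sgn (f1 (fst p))) ->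
  has_expect w a (fun p => gprod (snd p) (b (fst p))) ->
  expect w a (fun p => gprod (snd p - f1 (fst p)) (b (fst p))) <= alpha ->
  expect w a (fun p => (f1 (fst p) - snd p) * sgn (f1 (fst p))) <= eps ->
  expect w a (fun p => snd p * sgn (f1 (fst p)))
    >= expect w a (fun p => gprod (snd p) (b (fst p))) - alpha - eps.
Proof.
  intros [Hw _] Hb Hres Hgap Hsgn Hgp Halpha Heps.
  set (S := fun p : X * R => snd p * sgn (f1 (fst p))).
  set (D := fun p : X * R => (f1 (fst p) - snd p) * sgn (f1 (fst p))).
  set (G := fun p : X * R => gprod (snd p - f1 (fst p)) (b (fst p))).
  assert (Hpointwise : forall p, gprod (snd p) (b (fst p)) <= S p + D p + G p).
  { intros [x y]; unfold S, D, G; simpl.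
    replace (y * sgn (f1 x) + (f1 x - y) * sgn (f1 x)) with (f1 x * sgn (f1 x))
      by ring.
    rewrite Rmult_sgn_r.
    pose proof (gprod_sub_le y (y - f1 x) (b x) (Hb x)) as Hlip.
    replace (y - (y - f1 x)) with (f1 x) in Hlip by ring; lra. }
  assert (HSD : has_expect w a (fun p => S p + D p)) by now apply has_expect_plus.
  pose proof (expect_le _ w a _ _ Hw Hgp (has_expect_plus _ w a _ _ HSD Hres)
                Hpointwise) as Hmono.
  rewrite !expect_plus in Hmono by assumption.
  unfold S, D, G in *; lra.
Qed.
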